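(* Let $\mathcal{T}$ be the scheme on $\mathcal{M}$ given by $$\mathcal{T}(\mathbf{p})_{2i}=M_{15/16}\big(p_{i-1},\,M_{1/3}(p_i,p_{i+1})\big),\qquad \mathcal{T}(\mathbf{p})_{2i+1}=M_{15/16}\big(p_{i+2},\,M_{2/3}(p_i,p_{i+1})\big),\quad i\in\mathbb{Z}.$$ Then $\delta(\mathcal{T}(\mathbf{p}))\le\tfrac56\,\delta(\mathbf{p})$ for all manifold data $\mathbf{p}$, and $\mathcal{T}$ is convergent.
   Context: $\mathcal{M}$ is a geodesically complete connected Riemannian manifold with distance $d$. For $p_0,p_1\in\mathcal{M}$ a minimal geodesic $\gamma:[0,1]\to\mathcal{M}$ from $p_0$ to $p_1$ is fixed and $M_t(p_0,p_1)=\gamma(t)$, $t\in[0,1]$, so all $M_t(p_0,p_1)$ lie on the same geodesic, $d(p_0,M_t(p_0,p_1))=t\,d(p_0,p_1)$, $d(M_t(p_0,p_1),p_1)=(1-t)d(p_0,p_1)$ and $d(M_s(p_0,p_1),M_t(p_0,p_1))=|s-t|d(p_0,p_1)$. Data $\mathbf{p}=(p_i)_{i\in\mathbb{Z}}$ with $\delta(\mathbf{p})=\sup_id(p_i,p_{i+1})<\infty$. This is the geodesic-inductive-mean adaptation of the linear quartic B-spline scheme with mask $\frac1{16}(1,5,10,10,5,1)$. Convergence: for every data $\mathbf{p}$ the curves $\mathrm{PG}_k(\mathcal{T}^k(\mathbf{p}))$ converge uniformly on $\mathbb{R}$, where $\mathrm{PG}_k(\mathbf{q})(t)=M_{2^kt-n}(q_n,q_{n+1})$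 for $t\in[2^{-k}n,2^{-k}(n+1))$. *)

From Stdlib Require Import Reals Lra ZArith.
Open Scope R_scope.

(* Abstract setting: a complete metric space (X,d) with a fixed choice of
   geodesic means M t p0 p1 = gamma(t), gamma a fixed minimal geodesic
   from p0 to p1, satisfying the distance identities of the context for
   t in [0,1].  (A geodesically complete connected Riemannian manifold
   is such a space by Hopf--Rinow.) *)
Record geodesic_mean_space (X : Type) (d : X -> X -> R)
    (M : R -> X -> X -> X) : Prop := {
  gms_nonneg : forall x y, 0 <= d x y;
  gms_sep : forall x y, d x y = 0 <-> x = y;
  gms_sym : forall x y, d x y = d y x;
  gms_tri : forall x y z, d x z <= d x y + d y z;
  gms_complete : forall u : nat -> X,
      (forall eps, eps > 0 -> exists N, forall n m, (n >= N)%nat -> (m >= N)%nat ->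
          d (u n) (u m) < eps) ->
      exists l, forall eps, eps > 0 -> exists N, forall n, (n >= N)%nat -> d (u n) l < eps;
  gms_left : forall t p0 p1, 0 <= t <= 1 -> d p0 (M t p0 p1) = t * d p0 p1;
  gms_right : forall t p0 p1, 0 <= t <= 1 -> d (M t p0 p1) p1 = (1 - t) * d p0 p1;
  gms_between : forall s t p0 p1, 0 <= s <= 1 -> 0 <= t <= 1 ->
      d (M s p0 p1) (M t p0 p1) = Rabs (s - t) * d p0 p1
}.

Definition dist_set {X : Type} (d : X -> X -> R) (p : Z -> X) : R -> Prop :=
  fun r => exists i : Z, r = d (p i) (p (i + 1)%Z).

Definition scheme_T {X : Type} (M : R -> X -> X -> X) (p : Z -> X) : Z -> X :=
  fun j =>
    let i := Z.div j 2 in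
    if Z.even j
    then M (15/16) (p (i - 1)%Z) (M (1/3) (p i) (p (i + 1)%Z))
    else M (15/16) (p (i + 2)%Z) (M (2/3) (p i) (p (i + 1)%Z)).

Definition floorR (x : R) : Z := (up x - 1)%Z.

Definition PG {X : Type} (M : R -> X -> X -> X) (k : nat) (q : Z -> X) (t : R) : X :=
  let s := 2 ^ k * t in
  let n := floorR s in
  M (s - IZR n) (q n) (q (n + 1)%Z).

(* Every edge of T(p) is bridged by a short chain through the inner points
   M_{1/3}(p_i,p_{i+1}) and M_{2/3}(p_i,p_{i+1}): the outer mean M_{15/16} lands
   within delta/12 of its inner point, consecutive inner points and their
   neighbouring nodes are delta/3 apart, so every edge of T(p) has length at most
   delta/12 + delta/3 + delta/3 + delta/12 = 5 delta/6.  Consequently the k-th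
   iterate has edges at most (5/6)^k delta, and PG_k(T^k p)(t) moves by at most
   3 (5/6)^k delta from level k to level k+1 (each interpolant stays within one
   edge of a node, and T(q)_{2n}, T(q)_{2n+1} stay within one edge of q_n).
   The interpolants are therefore uniformly Cauchy with a geometric rate, and
   completeness gives the limit curve. *)

From Stdlib Require Import Reals ZArith Lra Lia ClassicalEpsilon.
Open Scope R_scope.

Definition edges_le {X : Type} (d : X -> X -> R) (p : Z -> X) (D : R) : Prop :=
  forall i, d (p i) (p (i + 1)%Z) <= D.

Lemma is_lub_exists_le (E : R -> Prop) (b : R) :
  (exists x, E x) -> (forall x, E x -> x <= b) -> exists m, is_lub E m /\ m <= b.
Proof.
  intros Hne Hb.
  destruct (completeness E) as [m Hm]; [exists b; exact Hb | exact Hne |].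
  exists m. split; [exact Hm | apply (proj2 Hm); exact Hb].
Qed.

Lemma geometric_eventually_lt (C r e : R) :
  0 <= C -> 0 <= r < 1 -> 0 < e -> exists K, forall n, (n >= K)%nat -> C * r ^ n < e.
Proof.
  intros HC Hr He.
  destruct (pow_lt_1_zero r ltac:(rewrite Rabs_right; lra) (e / (C + 1)))
    as [K HK]; [apply Rdiv_lt_0_compat; lra |].
  exists K. intros n Hn. specialize (HK n Hn).
  assert (Hrn : 0 <= r ^ n) by (apply pow_le; lra).
  rewrite Rabs_right in HK by lra.
  apply (Rmult_lt_compat_l (C + 1)) in HK; [| lra].
  replace ((C + 1) * (e / (C + 1))) with e in HK by (field; lra).
  nra.
Qed.

Lemma floorR_spec x : IZR (floorR x) <= x < IZR (floorR x) + 1.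
Proof. unfold floorR. rewrite minus_IZR. destruct (archimed x). lra. Qed.

Lemma floorR_unique x m : IZR m <= x < IZR m + 1 -> floorR x = m.
Proof.
  intros Hm. unfold floorR.
  rewrite <- (tech_up x (m + 1)); [lia | |]; rewrite plus_IZR; lra.
Qed.

Lemma floorR_double x :
  floorR (2 * x) = (2 * floorR x)%Z \/ floorR (2 * x) = (2 * floorR x + 1)%Z.
Proof.
  destruct (floorR_spec x) as [H1 H2].
  destruct (Rlt_or_le (2 * x) (2 * IZR (floorR x) + 1)).
  - left. apply floorR_unique. rewrite mult_IZR. lra.
  - right. apply floorR_unique. rewrite plus_IZR, mult_IZR. lra.
Qed.

Lemma scheme_T_even X (M : R -> X -> X -> X) p i :
  scheme_T M p (2 * i)%Z = M (15/16) (p (i - 1)%Z) (M (1/3) (p i) (p (i + 1)%Z)).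
Proof.
  unfold scheme_T.
  replace ((2 * i) / 2)%Z with i by (apply Z.div_unique with 0%Z; lia).
  now rewrite Z.even_mul.
Qed.

Lemma scheme_T_odd X (M : R -> X -> X -> X) p i :
  scheme_T M p (2 * i + 1)%Z = M (15/16) (p (i + 2)%Z) (M (2/3) (p i) (p (i + 1)%Z)).
Proof.
  unfold scheme_T.
  replace ((2 * i + 1) / 2)%Z with i by (apply Z.div_unique with 1%Z; lia).
  now rewrite Z.even_add, Z.even_mul.
Qed.

Section GeodesicMeanSpace.

Context {X : Type} {d : X -> X -> R} {M : R -> X -> X -> X}.
Hypothesis HX : geodesic_mean_space X d M.

Lemma edges_le_nonneg p D : edges_le d p D -> 0 <= D.
Proof.
  intros Hp. pose proof (Hp 0%Z). pose proof (gms_nonneg _ _ _ HX (p 0%Z) (p (0 + 1)%Z)).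
  lra.
Qed.

Lemma dist_mean_right_le t x y z :
  0 <= t <= 1 -> d (M t x y) y <= (1 - t) * (d x z + d z y).
Proof.
  intros Ht. rewrite (gms_right _ _ _ HX) by exact Ht.
  apply Rmult_le_compat_l; [lra | apply (gms_tri _ _ _ HX)].
Qed.

Section OneRefinement.

Variables (p : Z -> X) (D : R).
Hypothesis Hp : edges_le d p D.

Lemma scheme_T_even_near i :
  d (scheme_T M p (2 * i)%Z) (M (1/3) (p i) (p (i + 1)%Z)) <= D / 12.
Proof.
  rewrite scheme_T_even.
  pose proof (dist_mean_right_le (15/16) (p (i - 1)%Z) (M (1/3) (p i) (p (i + 1)%Z)) (p i)
                ltac:(lra)).
  pose proof (gms_left _ _ _ HX (1/3) (p i) (p (i + 1)%Z) ltac:(lra)).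
  pose proof (Hp (i - 1)%Z) as Hprev. rewrite Z.sub_add in Hprev.
  pose proof (Hp i). pose proof (gms_nonneg _ _ _ HX (p i) (p (i + 1)%Z)).
  lra.
Qed.

Lemma scheme_T_odd_near i :
  d (scheme_T M p (2 * i + 1)%Z) (M (2/3) (p i) (p (i + 1)%Z)) <= D / 12.
Proof.
  rewrite scheme_T_odd.
  pose proof (dist_mean_right_le (15/16) (p (i + 2)%Z) (M (2/3) (p i) (p (i + 1)%Z))
                (p (i + 1)%Z) ltac:(lra)).
  pose proof (gms_right _ _ _ HX (2/3) (p i) (p (i + 1)%Z) ltac:(lra)).
  rewrite (gms_sym _ _ _ HX (p (i + 2)%Z) (p (i + 1)%Z)),
    (gms_sym _ _ _ HX (p (i + 1)%Z) (M (2/3) _ _)) in *.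
  pose proof (Hp (i + 1)%Z) as Hnext. replace (i + 1 + 1)%Z with (i + 2)%Z in Hnext by ring.
  pose proof (Hp i). pose proof (gms_nonneg _ _ _ HX (p i) (p (i + 1)%Z)).
  lra.
Qed.

Lemma scheme_T_edges_le : edges_le d (scheme_T M p) (5/6 * D).
Proof.
  intros j. pose proof (edges_le_nonneg p D Hp).
  pose proof (gms_tri _ _ _ HX) as tri.
  destruct (Z.Even_or_Odd j) as [[i ->] | [i ->]].
  - pose proof (scheme_T_even_near i). pose proof (scheme_T_odd_near i).
    pose proof (gms_between _ _ _ HX (1/3) (2/3) (p i) (p (i + 1)%Z) ltac:(lra) ltac:(lra)).
    replace (Rabs (1/3 - 2/3)) with (1/3) in * by (rewrite Rabs_left by lra; lra).
    pose proof (Hp i).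
    pose proof (tri (scheme_T M p (2 * i)%Z) (M (1/3) (p i) (p (i + 1)%Z))
                    (scheme_T M p (2 * i + 1)%Z)).
    pose proof (tri (M (1/3) (p i) (p (i + 1)%Z)) (M (2/3) (p i) (p (i + 1)%Z))
                    (scheme_T M p (2 * i + 1)%Z)).
    rewrite (gms_sym _ _ _ HX (M (2/3) _ _)) in *.
    lra.
  - replace (2 * i + 1 + 1)%Z with (2 * (i + 1))%Z by ring.
    pose proof (scheme_T_odd_near i). pose proof (scheme_T_even_near (i + 1)).
    pose proof (gms_right _ _ _ HX (2/3) (p i) (p (i + 1)%Z) ltac:(lra)).
    pose proof (gms_left _ _ _ HX (1/3) (p (i + 1)%Z) (p (i + 1 + 1)%Z) ltac:(lra)).
    pose proof (Hp i). pose proof (Hp (i + 1)%Z).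
    set (B := M (2/3) (p i) (p (i + 1)%Z)) in *.
    set (C := M (1/3) (p (i + 1)%Z) (p (i + 1 + 1)%Z)) in *.
    pose proof (tri (scheme_T M p (2 * i + 1)%Z) B (scheme_T M p (2 * (i + 1))%Z)).
    pose proof (tri B (p (i + 1)%Z) (scheme_T M p (2 * (i + 1))%Z)).
    pose proof (tri (p (i + 1)%Z) C (scheme_T M p (2 * (i + 1))%Z)).
    rewrite (gms_sym _ _ _ HX C) in *.
    lra.
Qed.

Lemma scheme_T_near_parent n m :
  m = (2 * n)%Z \/ m = (2 * n + 1)%Z -> d (scheme_T M p m) (p n) <= D.
Proof.
  pose proof (edges_le_nonneg p D Hp). pose proof (Hp n).
  pose proof (gms_tri _ _ _ HX) as tri.
  intros [-> | ->].
  - pose proof (scheme_T_even_near n).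
    pose proof (gms_left _ _ _ HX (1/3) (p n) (p (n + 1)%Z) ltac:(lra)) as Hmid.
    rewrite (gms_sym _ _ _ HX (p n)) in Hmid.
    pose proof (tri (scheme_T M p (2 * n)%Z) (M (1/3) (p n) (p (n + 1)%Z)) (p n)).
    lra.
  - pose proof (scheme_T_odd_near n).
    pose proof (gms_left _ _ _ HX (2/3) (p n) (p (n + 1)%Z) ltac:(lra)) as Hmid.
    rewrite (gms_sym _ _ _ HX (p n)) in Hmid.
    pose proof (tri (scheme_T M p (2 * n + 1)%Z) (M (2/3) (p n) (p (n + 1)%Z)) (p n)).
    lra.
Qed.

End OneRefinement.

Lemma iter_scheme_T_edges_le p D k :
  edges_le d p D -> edges_le d (Nat.iter k (scheme_T M) p) ((5/6) ^ k * D).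
Proof.
  intros Hp. induction k as [| k IHk]; simpl Nat.iter.
  - now rewrite Rmult_1_l.
  - replace ((5/6) ^ S k * D) with (5/6 * ((5/6) ^ k * D)) by (simpl; ring).
    now apply scheme_T_edges_le.
Qed.

Lemma PG_near_node k q D t :
  edges_le d q D -> d (PG M k q t) (q (floorR (2 ^ k * t))) <= D.
Proof.
  intros Hq. unfold PG.
  set (n := floorR (2 ^ k * t)).
  destruct (floorR_spec (2 ^ k * t)) as [H1 H2]. fold n in H1, H2.
  rewrite (gms_sym _ _ _ HX), (gms_left _ _ _ HX) by lra.
  pose proof (Hq n). pose proof (gms_nonneg _ _ _ HX (q n) (q (n + 1)%Z)).
  nra.
Qed.

Lemma PG_refine_le k q D t :
  edges_le d q D -> d (PG M k q t) (PG M (S k) (scheme_T M q) t) <= 3 * D.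
Proof.
  intros Hq. pose proof (edges_le_nonneg q D Hq).
  set (n := floorR (2 ^ k * t)).
  set (m := floorR (2 ^ S k * t)).
  pose proof (PG_near_node k q D t Hq) as Hcoarse.
  pose proof (PG_near_node (S k) (scheme_T M q) _ t (scheme_T_edges_le q D Hq)) as Hfine.
  assert (Hchild : d (scheme_T M q m) (q n) <= D).
  { apply scheme_T_near_parent; [exact Hq |].
    unfold m, n. replace (2 ^ S k * t) with (2 * (2 ^ k * t)) by (simpl; ring).
    apply floorR_double. }
  fold n in Hcoarse. fold m in Hfine.
  pose proof (gms_tri _ _ _ HX (PG M k q t) (q n) (PG M (S k) (scheme_T M q) t)).
  pose proof (gms_tri _ _ _ HX (q n) (scheme_T M q m) (PG M (S k) (scheme_T M q) t)).
  rewrite (gms_sym _ _ _ HX (q n)), (gms_sym _ _ _ HX (scheme_T M q m)) in *.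
  lra.
Qed.

Section GeometricSteps.

Variables (C r : R).
Hypotheses (HC : 0 <= C) (Hr : 0 <= r < 1).

Let HG : 0 <= C / (1 - r).
Proof. apply Rmult_le_pos; [exact HC | apply Rlt_le, Rinv_0_lt_compat; lra]. Qed.

Lemma geometric_steps_tail (u : nat -> X) :
  (forall k, d (u k) (u (S k)) <= C * r ^ k) ->
  forall k m, (k <= m)%nat -> d (u k) (u m) <= C / (1 - r) * r ^ k.
Proof.
  intros Hs k m Hkm.
  assert (Htel : forall j, d (u k) (u (k + j)%nat) <= C / (1 - r) * (r ^ k - r ^ (k + j))).
  { induction j as [| j IHj].
    - rewrite Nat.add_0_r, (proj2 (gms_sep _ _ _ HX _ _) eq_refl). lra.
    - rewrite Nat.add_succ_r.
      pose proof (gms_tri _ _ _ HX (u k) (u (k + j)%nat) (u (S (k + j)))).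
      pose proof (Hs (k + j)%nat).
      replace (C / (1 - r) * (r ^ k - r ^ S (k + j)))
        with (C / (1 - r) * (r ^ k - r ^ (k + j)) + C * r ^ (k + j))
        by (simpl; field; lra).
      lra. }
  replace m with (k + (m - k))%nat by lia.
  pose proof (Htel (m - k)%nat).
  assert (0 <= C / (1 - r) * r ^ (k + (m - k))).
  { apply Rmult_le_pos; [exact HG | apply pow_le; lra]. }
  lra.
Qed.

Lemma geometric_steps_limit (u : nat -> X) :
  (forall k, d (u k) (u (S k)) <= C * r ^ k) ->
  exists l, forall k, d (u k) l <= C / (1 - r) * r ^ k.
Proof.
  intros Hs.
  pose proof (geometric_steps_tail u Hs) as Htail.
  destruct (gms_complete _ _ _ HX u) as [l Hl].
  { intros eps Heps.
    destruct (geometric_eventually_lt (C / (1 - r)) r (eps / 2) HG Hr ltac:(lra)) as [K HK].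
    exists K. intros n m Hn Hm.
    pose proof (Htail K n Hn). pose proof (Htail K m Hm). pose proof (HK K (le_n K)).
    pose proof (gms_tri _ _ _ HX (u n) (u K) (u m)).
    rewrite (gms_sym _ _ _ HX (u n) (u K)) in *.
    lra. }
  exists l. intros k. apply Rle_plus_epsilon. intros eps Heps.
  destruct (Hl eps ltac:(lra)) as [N HN].
  pose proof (HN (Nat.max N k) ltac:(lia)).
  pose proof (Htail k (Nat.max N k) ltac:(lia)).
  pose proof (gms_tri _ _ _ HX (u k) (u (Nat.max N k)) l).
  lra.
Qed.

Lemma uniform_limit_of_geometric_steps (u : nat -> R -> X) :
  (forall k t, d (u k t) (u (S k) t) <= C * r ^ k) ->
  exists F : R -> X, forall eps, eps > 0 ->
    exists K, forall k, (k >= K)%nat -> forall t, d (u k t) (F t) < eps.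
Proof.
  intros Hs.
  destruct (choice (fun t l => forall k, d (u k t) l <= C / (1 - r) * r ^ k)) as [F HF].
  { intros t. exact (geometric_steps_limit (fun k => u k t) (fun k => Hs k t)). }
  exists F. intros eps Heps.
  destruct (geometric_eventually_lt (C / (1 - r)) r eps HG Hr Heps) as [K HK].
  exists K. intros k Hk t. pose proof (HF t k). pose proof (HK k Hk). lra.
Qed.

End GeometricSteps.

End GeodesicMeanSpace.

Theorem mainTheorem11 (X : Type) (d : X -> X -> R) (M : R -> X -> X -> X)
  (HX : geodesic_mean_space X d M) :
  forall (p : Z -> X) (delta : R),
    is_lub (dist_set d p) delta ->
    (exists deltaT : R,
        is_lub (dist_set d (scheme_T M p)) deltaT /\ deltaT <= 5/6 * delta) /\
    (exists F : R -> X,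
        forall eps : R, eps > 0 ->
        exists K : nat, forall k : nat, (k >= K)%nat -> forall t : R,
          d (PG M k (Nat.iter k (scheme_T M) p) t) (F t) < eps).
Proof.
  intros p delta [Hub _].
  assert (Hp : edges_le d p delta) by (intros i; apply Hub; now exists i).
  split.
  - apply is_lub_exists_le.
    + now exists (d (scheme_T M p 0%Z) (scheme_T M p (0 + 1)%Z)), 0%Z.
    + intros x [j ->]. exact (scheme_T_edges_le HX p delta Hp j).
  - apply (uniform_limit_of_geometric_steps HX (3 * delta) (5/6));
      [pose proof (edges_le_nonneg HX p delta Hp); lra | lra |].
    intros k t. replace (3 * delta * (5/6) ^ k) with (3 * ((5/6) ^ k * delta)) by ring.
    exact (PG_refine_le HX k _ _ t (iter_scheme_T_edges_le HX p delta k Hp)).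
Qed.
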